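(* Let $(X,d)$ be a separable metric space and $f:X\to X$ a Borel measurable map. If either $f$ has only countably many distinct stable classes, or $f$ is Lyapunov stable on its recurrent set $R(f)$, then $f$ has no $f$-invariant Borel probability measure that is an expansive measure of $f$.
   Context: The stable class of $p\in X$ is $W^s(p)=\{x\in X:\lim_{n\to\infty}d(f^n(x),f^n(p))=0\}$. The recurrent set is $R(f)=\{x\in X: x\in\omega_f(x)\}$, where $\omega_f(x)$ is the set of limits $\lim_{k\to\infty}f^{n_k}(x)$ over sequences $n_k\to\infty$. $f$ is Lyapunov stable on $A\subset X$ if for every $x\in A$ and $\epsilon>0$ there is a neighborhood $U(x)$ of $x$ with $d(f^n(x),f^n(y))<\epsilon$ for all $n\ge0$ and $y\in U(x)\cap A$. A Borel probability measure $\mu$ is an expansive measure of $f$ if there is $\delta>0$ with $\mu(\Phi_\delta(x))=0$ for all $x\in X$, where $\Phi_\delta(x)=\{y\in X: d(f^i(y),f^i(x))\le\delta \ \forall i\in\{0,1,2,\dots\}\}$; it is invariant if $\mu=\mu\circ f^{-1}$. *)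

From HB Require Import structures.
From mathcomp Require Import all_boot all_order all_algebra.
From mathcomp Require Import all_classical all_reals all_analysis.
Set Implicit Arguments. Unset Strict Implicit. Unset Printing Implicit Defensive.
Import Order.TTheory GRing.Theory Num.Theory.
Import numFieldNormedType.Exports.
Local Open Scope classical_set_scope.
Local Open Scope ring_scope.

Section Dyn.
Context {R : realType} {X : Type}.
Variable dist : X -> X -> R.

Definition is_metric : Prop :=
  (forall x y, 0 <= dist x y) /\
  (forall x y, dist x y = 0 <-> x = y) /\
  (forall x y, dist x y = dist y x) /\
  (forall x y z, dist x z <= dist x y + dist y z).

Definition dopen (U : set X) : Prop :=
  forall x, U x -> exists2 r : R, 0 < r & forall y, dist x y < r -> U y.

Definition separable : Prop :=
  exists D : set X, countable D /\
    forall x (e : R), 0 < e -> exists2 y, D y & dist x y < e.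

Definition borel_sets : set (set X) := <<s dopen >>.

Variable f : X -> X.

Definition stable_class (p : X) : set X :=
  [set x | (fun n => dist (iter n f x) (iter n f p)) @ \oo --> (0 : R)].

Definition omega_limit (x : X) : set X :=
  [set y | exists nk : nat -> nat,
     (forall N, exists K, forall k, (K <= k)%N -> (N <= nk k)%N) /\
     (fun k => dist (iter (nk k) f x) y) @ \oo --> (0 : R)].

Definition recurrent_set : set X := [set x | omega_limit x x].

Definition lyapunov_stable_on (A : set X) : Prop :=
  forall x, A x -> forall eps : R, 0 < eps ->
    exists U : set X, [/\ dopen U, U x &
      forall y, U y -> A y -> forall n, dist (iter n f x) (iter n f y) < eps].

Definition Phi (delta : R) (x : X) : set X :=
  [set y | forall i : nat, dist (iter i f y) (iter i f x) <= delta].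

Definition expansive_measure (mu : set X -> \bar R) : Prop :=
  exists2 delta : R, 0 < delta & forall x, mu (Phi delta x) = 0%E.

Definition invariant_measure (mu : set X -> \bar R) : Prop :=
  forall A, borel_sets A -> mu (f @^-1` A) = mu A.

End Dyn.

(** Both hypotheses make almost every point lie in a countable union of
    sets each of which is contained in some dynamical ball [Phi delta x],
    and each such set is null for an expansive measure.  If there are
    countably many stable classes, this covers [X] since [W^s(p)] is the
    union over [N] of the preimages under [f^N] of [Phi delta (f^N p)].
    Under Lyapunov stability on [R(f)], every recurrent point has a ball,
    taken from a countable base, whose recurrent points stay
    [delta]-close to it forever; and by Poincare recurrence, which needs
    separability and the invariance of the probability, [R(f)] has full
    measure.  Either way [X] itself would be null. *)

From mathcomp Require Import all_boot all_order all_algebra.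
From mathcomp Require Import all_classical all_reals all_analysis.
From mathcomp Require Import lra.
Import Order.TTheory GRing.Theory Num.Theory.
Import numFieldNormedType.Exports.
Local Open Scope classical_set_scope.
Local Open Scope ring_scope.

Lemma negligible_bigcup_countable d (T : sigmaRingType d) (R : realFieldType)
    (mu : {measure set T -> \bar R}) I (D : set I) (F : I -> set T) :
  countable D -> (forall i, D i -> mu.-negligible (F i)) ->
  mu.-negligible (\bigcup_(i in D) F i).
Proof.
move=> /pfcard_geP [->|/surjfunPex [g ->]] nF.
  by rewrite bigcup_set0; exact: negligible_set0.
rewrite bigcup_image; apply: negligible_bigcup => n.
by apply: nF; exists n.
Qed.

Lemma nat_mul_le1_le0 (R : realType) (r : R) :
  (forall n : nat, r *+ n <= 1) -> r <= 0.
Proof.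
move=> le1; rewrite leNgt; apply/negP => r_gt0.
have := le1 (Num.truncn r^-1).+1; rewrite -mulr_natl.
have := truncnS_gt r^-1.
have : r * r^-1 = 1 by rewrite divff // gt_eqF.
move: (Num.truncn r^-1).+1%:R => N; nra.
Qed.

Section MetricSpace.
Context {R : realType} {X : Type} (dist : X -> X -> R).
Hypothesis dist_metric : is_metric dist.

Lemma dist_ge0 x y : 0 <= dist x y. Proof. by case: dist_metric. Qed.

Lemma dist_xx x : dist x x = 0.
Proof. by case: dist_metric => _ [/(_ x x) [_ ->]]. Qed.

Lemma distC x y : dist x y = dist y x.
Proof. by case: dist_metric => _ [_ [->]]. Qed.

Lemma dist_triangle x y z : dist x z <= dist x y + dist y z.
Proof. by case: dist_metric => _ [_ [_ ->]]. Qed.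

Definition dball (c : X) (n : nat) := [set z | dist c z < n.+1%:R^-1].

Lemma dopen_dball c n : dopen dist (dball c n).
Proof.
move=> x /= cx; exists (n.+1%:R^-1 - dist c x); first by rewrite subr_gt0.
move=> z; rewrite /dball /=; have := dist_triangle c x z.
by move: n.+1%:R^-1 => a; lra.
Qed.

Lemma dopen_setC_cball c r : dopen dist (~` [set z | dist z c <= r]).
Proof.
move=> x /= /negP; rewrite -ltNge => rx; exists (dist x c - r).
  by rewrite subr_gt0.
by move=> z xz /=; apply/negP; rewrite -ltNge; have := dist_triangle x z c; lra.
Qed.

Lemma dense_dball_sub (D : set X) :
  (forall x e, 0 < e -> exists2 y, D y & dist x y < e) ->
  forall x r, 0 < r ->
  exists c n, [/\ D c, dball c n x & dball c n `<=` [set z | dist x z < r]].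
Proof.
move=> D_dense x r r_gt0; have r2_gt0 : 0 < r / 2 by rewrite divr_gt0.
have [N _ /(_ N (leqnn N)) /= N_lt] := near_infty_natSinv_lt (PosNum r2_gt0).
have [c Dc xc] := D_dense x N.+1%:R^-1 (ltac:(by rewrite invr_gt0)).
exists c, N; split => //; first by rewrite /dball /= distC.
move=> z; rewrite /dball /= => cz; have := dist_triangle x c z.
by move: N_lt xc cz; move: N.+1%:R^-1 => a; lra.
Qed.

Lemma recurrent_of_returns (f : X -> X) x :
  (forall K, exists m, (K <= m)%N /\ dist x (iter m f x) < K.+1%:R^-1) ->
  recurrent_set dist f x.
Proof.
move=> /choice [nk nkP].
exists nk; split.
  by move=> N; exists N => k Nk; apply: leq_trans Nk (nkP k).1.
apply/cvgrPdist_lt => e e_gt0; near=> k.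
rewrite sub0r normrN ger0_norm ?dist_ge0 // distC.
apply: lt_trans (nkP k).2 _; near: k.
exact: near_infty_natSinv_lt (PosNum e_gt0).
Unshelve. all: by end_near.
Qed.

End MetricSpace.

Section InvariantProbability.
Context {R : realType} {d : measure_display} {X : measurableType d}.
Variables (f : X -> X) (P : probability X R).
Hypothesis f_measurable : measurable_fun setT f.
Hypothesis P_invariant : forall A, measurable A -> P (f @^-1` A) = P A.

Lemma preimage_iterS n (A : set X) :
  iter n.+1 f @^-1` A = iter n f @^-1` (f @^-1` A).
Proof. by []. Qed.

Lemma measurable_preimage_iter n A :
  measurable A -> measurable (iter n f @^-1` A).
Proof.
elim: n A => [//|n IH] A mA; rewrite preimage_iterS.
by apply: IH; rewrite -[_ @^-1` _]setTI; exact: f_measurable.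
Qed.

Lemma measure_preimage_iter n A :
  measurable A -> P (iter n f @^-1` A) = P A.
Proof.
elim: n A => [//|n IH] A mA; rewrite preimage_iterS IH ?P_invariant //.
by rewrite -[_ @^-1` _]setTI; exact: f_measurable.
Qed.

Lemma negligible_preimage_iter n A :
  measurable A -> P A = 0%E -> P.-negligible (iter n f @^-1` A).
Proof.
move=> mA PA0; apply/negligibleP; first exact: measurable_preimage_iter.
by rewrite -PA0; exact: measure_preimage_iter.
Qed.

Definition never_returns (B : set X) :=
  B `&` \bigcap_n ~` (iter n.+1 f @^-1` B).

Lemma measurable_never_returns B : measurable B -> measurable (never_returns B).
Proof.
move=> mB; apply: measurableI => //; apply: bigcapT_measurable => n.
exact/measurableC/measurable_preimage_iter.
Qed.

Lemma trivIset_preimage_never_returns B :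
  trivIset setT (fun m => iter m f @^-1` never_returns B).
Proof.
apply: ltn_trivIset => n m lt_mn; apply/seteqP; split => // x /=.
move=> [[_ nret] [Bx _]].
apply: (nret (n - m.+1)%N I); rewrite /= -iterD -iterS -addSn addSnnS subnK //.
Qed.

(* The preimages of the wandering set are pairwise disjoint and have equal
   measure, so their measure is zero in a probability space. *)
Lemma never_returns_null B : measurable B -> P (never_returns B) = 0%E.
Proof.
move=> mB; have mW := measurable_never_returns _ mB.
have sum_le1 n : (\sum_(i < n) P (never_returns B) <= 1)%E.
  have := @measure_bigsetU _ _ _ P _ (fun i => measurable_preimage_iter i _ mW)
    (trivIset_preimage_never_returns B) n.
  rewrite (eq_bigr (fun=> P (never_returns B))) => [|i _]; last first.
    exact: measure_preimage_iter.
  move=> <-; apply: probability_le1.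
  by apply: bigsetU_measurable => i _; exact: measurable_preimage_iter.
have : (0 <= P (never_returns B))%E by exact: measure_ge0.
case: (P (never_returns B)) sum_le1 => [r le1 r_ge0|/(_ 1%N)|//].
- rewrite lee_fin in r_ge0; congr (_%:E); apply/eqP; rewrite eq_le r_ge0 andbT.
  apply: nat_mul_le1_le0 => n; have := le1 n.
  by rewrite sumEFin lee_fin sumr_const card_ord.
- by rewrite big_ord1.
Qed.

Definition visits_infinitely (B : set X) (x : X) :=
  forall N, exists2 n, (N <= n)%N & B (iter n f x).

Lemma last_visit_never_returns B x N :
  B x -> (forall n, (N <= n)%N -> ~ B (iter n f x)) ->
  exists m, never_returns B (iter m f x).
Proof.
elim: N => [|N IH] Bx notB; first by case: (notB 0%N (leq0n 0)).
have [BN|notBN] := pselect (B (iter N f x)); last first.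
  by apply: IH => // n; rewrite leq_eqVlt => /orP [/eqP <- //|]; exact: notB.
exists N; split => // k _; rewrite /= -iterS -iterD; apply: notB.
by rewrite addSn ltnS leq_addl.
Qed.

Lemma poincare_recurrence B : measurable B ->
  P.-negligible [set x | B x /\ ~ visits_infinitely B x].
Proof.
move=> mB.
apply: (negligibleS (A := \bigcup_m (iter m f @^-1` never_returns B))).
  move=> x [Bx not_inf]; apply: contrapT => no_last; apply: not_inf => N.
  apply: contrapT => not_after; apply: no_last.
  have [|m Wm] := last_visit_never_returns B x N Bx; last by exists m.
  by move=> n Nn Bn; apply: not_after; exists n.
apply: negligible_bigcup => m; apply: negligible_preimage_iter.
  exact: measurable_never_returns.
exact: never_returns_null.
Qed.

End InvariantProbability.

Section BorelDynamics.
Context {R : realType} {d : measure_display} {X : measurableType d}.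
Variables (dist : X -> X -> R) (f : X -> X) (P : probability X R).
Hypothesis dist_metric : is_metric dist.
Hypothesis dopen_measurable : forall U, dopen dist U -> measurable U.
Hypothesis f_measurable : measurable_fun setT f.
Hypothesis P_invariant : forall A, measurable A -> P (f @^-1` A) = P A.

Lemma measurable_Phi delta x : measurable (Phi dist f delta x).
Proof.
have -> : Phi dist f delta x =
    \bigcap_i (iter i f @^-1` [set z | dist z (iter i f x) <= delta]).
  by apply/seteqP; split=> y /= Phi_y i; [move=> _; exact: Phi_y|exact: Phi_y].
apply: bigcapT_measurable => i; apply: measurable_preimage_iter => //.
rewrite -[X in measurable X]setCK; apply: measurableC.
exact/dopen_measurable/dopen_setC_cball.
Qed.

Lemma recurrent_set_ae :
  separable dist -> P.-negligible (~` recurrent_set dist f).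
Proof.
move=> [D [D_countable D_dense]].
pose nonrecurrent c n :=
  [set x | dball dist c n x /\ ~ visits_infinitely f (dball dist c n) x].
apply: (negligibleS (A := \bigcup_(c in D) \bigcup_n nonrecurrent c n)).
  move=> x not_rec; apply: contrapT => not_cover; apply: not_rec.
  apply: recurrent_of_returns => // K.
  have K_gt0 : 0 < K.+1%:R^-1 :> R by rewrite invr_gt0.
  have [c [n [Dc cx sub]]] := dense_dball_sub _ dist_metric _ D_dense x _ K_gt0.
  have visits : visits_infinitely f (dball dist c n) x.
    apply: contrapT => not_visits; apply: not_cover.
    by exists c => //; exists n.
  have [m Km cm] := visits K.
  by exists m; split => //; exact: sub.
apply: negligible_bigcup_countable => // c _; apply: negligible_bigcup => n.
exact/poincare_recurrence/dopen_measurable/dopen_dball.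
Qed.

Section Expansive.
Variables (delta : R) (delta_gt0 : 0 < delta).
Hypothesis Phi_null : forall x, P (Phi dist f delta x) = 0%E.

Lemma negligible_sub_Phi A x : A `<=` Phi dist f delta x -> P.-negligible A.
Proof.
move=> APhi; apply: negligibleS APhi _.
by apply/negligibleP; [exact: measurable_Phi|exact: Phi_null].
Qed.

Lemma stable_class_sub_bigcup_Phi p :
  stable_class dist f p `<=`
  \bigcup_N (iter N f @^-1` Phi dist f delta (iter N f p)).
Proof.
move=> x /= /cvgrPdist_lt /(_ delta delta_gt0) [N _ closeN].
exists N => // i /=.
rewrite -!iterD; have := closeN (i + N)%N (leq_addl _ _).
by rewrite sub0r normrN ger0_norm ?dist_ge0 // => /ltW.
Qed.

Lemma negligible_stable_class p : P.-negligible (stable_class dist f p).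
Proof.
apply: negligibleS (stable_class_sub_bigcup_Phi p) _.
apply: negligible_bigcup => N; apply: negligible_preimage_iter => //.
exact: measurable_Phi.
Qed.

Lemma negligible_countable_stable_classes :
  countable (range (stable_class dist f)) -> P.-negligible setT.
Proof.
move=> countable_W.
apply: (negligibleS (A := \bigcup_(A in range (stable_class dist f)) A)).
  move=> x _; exists (stable_class dist f x); first by exists x.
  rewrite /stable_class /= (eq_cvg _ _ (fun n => dist_xx _ dist_metric _)).
  exact: cvg_cst.
apply: negligible_bigcup_countable => // _ [p _ <-].
exact: negligible_stable_class.
Qed.

Lemma negligible_recurrent_set_lyapunov : separable dist ->
  lyapunov_stable_on dist f (recurrent_set dist f) ->
  P.-negligible (recurrent_set dist f).
Proof.
move=> [D [D_countable D_dense]] lyap.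
pose piece c n := dball dist c n `&` recurrent_set dist f.
pose good c := [set n | exists x, piece c n `<=` Phi dist f delta x].
apply: (negligibleS (A := \bigcup_(c in D) \bigcup_(n in good c) piece c n)).
  move=> x rec_x; have [U [U_open Ux U_close]] := lyap x rec_x delta delta_gt0.
  have [r r_gt0 xrU] := U_open x Ux.
  have [c [n [Dc cx sub]]] := dense_dball_sub _ dist_metric _ D_dense x _ r_gt0.
  exists c => //; exists n => //; exists x => z [cz rec_z] i.
  by rewrite (distC _ dist_metric); apply/ltW/U_close => //; exact/xrU/sub.
apply: negligible_bigcup_countable => // c _.
apply: negligible_bigcup_countable => [|n [x]]; first exact: countableP.
exact: negligible_sub_Phi.
Qed.

End Expansive.
End BorelDynamics.

Theorem corollary3p5 (R : realType) (d : measure_display) (X : measurableType d)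
  (dist : X -> X -> R)
  (Hmetric : is_metric dist)
  (Hsep : separable dist)
  (Hborel : @measurable d X = borel_sets dist)
  (f : X -> X)
  (Hf : measurable_fun setT f)
  (Hcase : countable (range (stable_class dist f)) \/
           lyapunov_stable_on dist f (recurrent_set dist f)) :
  forall P : probability X R,
    invariant_measure dist f P -> ~ expansive_measure dist f P.
Proof.
move=> P P_inv [delta delta_gt0 Phi_null].
have dopen_meas U : dopen dist U -> measurable U.
  by rewrite Hborel; exact: sub_sigma_algebra.
have P_invariant A : measurable A -> P (f @^-1` A) = P A.
  by rewrite Hborel; exact: P_inv.
suff : P.-negligible setT.
  move=> /(measure_negligible measurableT) P0; have := probability_setT P.
  by rewrite P0 => /eqP; rewrite eq_sym onee_eq0.
case: Hcase => [countable_W|lyap].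
  exact: (negligible_countable_stable_classes _ _ _ Hmetric dopen_meas Hf
    P_invariant _ delta_gt0 Phi_null countable_W).
rewrite -(setvU (recurrent_set dist f)); apply: negligibleU.
  exact: (recurrent_set_ae _ _ _ Hmetric dopen_meas Hf P_invariant Hsep).
exact: (negligible_recurrent_set_lyapunov _ _ _ Hmetric dopen_meas Hf _
  delta_gt0 Phi_null Hsep lyap).
Qed.
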